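(* Let $D$ be a linear differential operator of second order that is elliptic at ${\bf z}$, and let ${\bf X}=\{{\bf x}_1,\dots,{\bf x}_N\}$ with ${\bf x}_1={\bf z}$. Then there is no positive numerical differentiation formula $Df({\bf z})\approx\sum_{j=1}^Nw_jf({\bf x}_j)$ that is exact of order $q$ for any $q\ge5$.
   Context: $\Pi^d_q$: real polynomials in $d$ variables of total degree $<q$. $Df=\sum_{|\alpha|\le2}c_\alpha\partial^\alpha f$ with real coefficient functions; $D$ is elliptic at ${\bf z}$ if $\sum_{|\alpha|=2}c_\alpha({\bf z})\xi^\alpha>0$ for all $\xi\in\mathbb{R}^d\setminus\{0\}$. ${\bf X}$ consists of distinct points. A formula with ${\bf x}_1={\bf z}$ is positive if $w_1<0$ and $w_j>0$ for $j=2,\dots,N$. It is exact of order $q$ if $Dp({\bf z})=\sum_jw_jp({\bf x}_j)$ for all $p\in\Pi^d_q$. *)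

From HB Require Import structures.
From mathcomp Require Import all_boot all_order all_algebra.
Set Implicit Arguments. Unset Strict Implicit. Unset Printing Implicit Defensive.
Import Order.TTheory GRing.Theory Num.Theory.
Local Open Scope ring_scope.

(* Points of R^d are row vectors 'rV[R]_d.
   Multi-indices alpha are finite functions 'I_d -> 'I_k (coerced to nat);
   |alpha| = mdeg alpha. *)
Definition mdeg (d k : nat) (a : {ffun 'I_d -> 'I_k}) : nat := (\sum_(i < d) a i)%N.

Definition mono (R : pzRingType) (d k : nat) (a : {ffun 'I_d -> 'I_k}) (x : 'rV[R]_d) : R :=
  \prod_(i < d) x ord0 i ^+ a i.

(* A real polynomial in d variables of total degree < q, given by its
   coefficients c alpha on monomials x^alpha (alpha_i < q). *)
Definition inPi (R : pzRingType) (d q : nat) (c : {ffun 'I_d -> 'I_q} -> R) : Prop :=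
  forall a, (q <= mdeg a)%N -> c a = 0.

Definition peval (R : pzRingType) (d q : nat) (c : {ffun 'I_d -> 'I_q} -> R) (x : 'rV[R]_d) : R :=
  \sum_a c a * mono a x.

(* Partial derivative d^beta p evaluated at x, beta a multi-index:
   d^beta x^alpha = prod_i alpha_i (alpha_i-1)...(alpha_i-beta_i+1) x_i^(alpha_i-beta_i)
   (the falling factorial n ^_ m is 0 when m > n). *)
Definition pderiv (R : pzRingType) (d q k : nat) (b : {ffun 'I_d -> 'I_k})
    (c : {ffun 'I_d -> 'I_q} -> R) (x : 'rV[R]_d) : R :=
  \sum_a c a * \prod_(i < d) (((a i) ^_ (b i))%:R * x ord0 i ^+ (a i - b i)).

Definition Dop (R : pzRingType) (d q : nat) (coef : {ffun 'I_d -> 'I_3} -> 'rV[R]_d -> R)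
    (c : {ffun 'I_d -> 'I_q} -> R) (z : 'rV[R]_d) : R :=
  \sum_(b | (mdeg b <= 2)%N) coef b z * pderiv b c z.

Definition elliptic_at (R : realFieldType) (d : nat)
    (coef : {ffun 'I_d -> 'I_3} -> 'rV[R]_d -> R) (z : 'rV[R]_d) : Prop :=
  forall xi : 'rV[R]_d, xi != 0 ->
    0 < \sum_(b | mdeg b == 2%N) coef b z * mono b xi.

(* The formula with nodes x_0 = z, x_1, ..., x_N (0-based) and weights w is positive. *)
Definition positive_formula (R : realFieldType) (N : nat) (w : 'I_N.+1 -> R) : Prop :=
  w ord0 < 0 /\ (forall j : 'I_N.+1, j != ord0 -> 0 < w j).

Definition exact_of_order (R : realFieldType) (d N : nat)
    (coef : {ffun 'I_d -> 'I_3} -> 'rV[R]_d -> R) (z : 'rV[R]_d)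
    (x : 'I_N.+1 -> 'rV[R]_d) (w : 'I_N.+1 -> R) (q : nat) : Prop :=
  forall c : {ffun 'I_d -> 'I_q} -> R, inPi c ->
    Dop coef c z = \sum_(j < N.+1) w j * peval c (x j).

From HB Require Import structures.
From mathcomp Require Import all_boot all_order all_algebra.
From mathcomp Require Import ring zify.
Import Order.TTheory GRing.Theory Num.Theory.
Local Open Scope ring_scope.
Set Implicit Arguments. Unset Strict Implicit.

(* Test exactness on the polynomials (x_i - z_i)^2 and (x_i - z_i)^4 for one
   coordinate i.  The second operator value vanishes (D has order 2), so
   sum_j w_j (x_j - z)_i^4 = 0; as w_j > 0 for every node x_j <> z, all nodes
   share their i-th coordinate with z.  Then the first equation reads
   2 c_ii(z) = sum_j w_j (x_j - z)_i^2 = 0, contradicting ellipticity. *)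

Section ShiftedPowers.

Variable R : comPzRingType.

Definition shift_coef (n : nat) (a : R) (k : nat) : R :=
  'C(n, k)%:R * (- a) ^+ (n - k).

Lemma shift_coef_small n a k : (n < k)%N -> shift_coef n a k = 0.
Proof. by move=> ltnk; rewrite /shift_coef bin_small // mul0r. Qed.

Lemma sum_shift_coef q n a (F : nat -> R) : (n < q)%N ->
  \sum_(k < q) shift_coef n a k * F k = \sum_(k < n.+1) shift_coef n a k * F k.
Proof.
move=> ltnq; rewrite [RHS](big_ord_widen q (fun k => shift_coef n a k * F k)) //.
rewrite [RHS]big_mkcond; apply: eq_bigr => k _; rewrite ltnS.
by case: leqP => // /shift_coef_small ->; rewrite mul0r.
Qed.

Lemma sum_shift_coef_exp q n a y : (n < q)%N ->
  \sum_(k < q) shift_coef n a k * y ^+ k = (y - a) ^+ n.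
Proof.
move=> ltnq; rewrite (sum_shift_coef _ (fun k => y ^+ k)) // addrC exprDn.
by apply: eq_bigr => k _; rewrite /shift_coef -mulr_natl; ring.
Qed.

Lemma sum_shift_coef_deriv q n b a : (n < q)%N -> (n <= 4)%N -> (b < 3)%N ->
  \sum_(k < q) shift_coef n a k * ((k ^_ b)%:R * a ^+ (k - b)) =
  if n == b then (n`!)%:R else 0.
Proof.
move=> ltnq len4 ltb3.
rewrite (sum_shift_coef _ (fun k => (k ^_ b)%:R * a ^+ (k - b))) //.
case: n len4 ltnq => [|[|[|[|[|n]]]]] // _ _; case: b ltb3 => [|[|[|b]]] // _;
  rewrite !big_ord_recr big_ord0 /shift_coef ffactE /subn /= ?binS ?bin0 ?bin0n ?factS ?fact0 /=;
  ring.
Qed.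

End ShiftedPowers.

(* Coefficients of the polynomial x |-> prod_m (x_m - z_m)^(n_m). *)
Definition shifted_monomial (R : comPzRingType) (d q : nat) (n : 'I_d -> nat)
    (z : 'rV[R]_d) : {ffun 'I_d -> 'I_q} -> R :=
  fun a => \prod_(m < d) shift_coef (n m) (z ord0 m) (a m).
Arguments shifted_monomial {R d} q n z _.

Section ShiftedMonomials.

Variables (R : comPzRingType) (d q : nat) (n : 'I_d -> nat) (z : 'rV[R]_d).

Lemma peval_shifted_monomial (y : 'rV[R]_d) : (forall m, n m < q)%N ->
  peval (shifted_monomial q n z) y = \prod_m (y ord0 m - z ord0 m) ^+ n m.
Proof.
move=> ltnq; rewrite /peval /shifted_monomial /mono /=.
under eq_bigr do rewrite -big_split /=.
rewrite -(bigA_distr_bigA (fun m (k : 'I_q) => shift_coef (n m) (z ord0 m) k * y ord0 m ^+ k)).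
by apply: eq_bigr => m _; apply: sum_shift_coef_exp.
Qed.

Lemma pderiv_shifted_monomial (b : {ffun 'I_d -> 'I_3}) :
  (forall m, n m < q)%N -> (forall m, n m <= 4)%N ->
  pderiv b (shifted_monomial q n z) z =
  \prod_m (if n m == b m then ((n m)`!)%:R else 0).
Proof.
move=> ltnq len4; rewrite /pderiv /shifted_monomial /=.
under eq_bigr do rewrite -big_split /=.
rewrite -(bigA_distr_bigA (fun m (k : 'I_q) => shift_coef (n m) (z ord0 m) k *
   ((k ^_ b m)%:R * z ord0 m ^+ (k - b m)))).
by apply: eq_bigr => m _; apply: sum_shift_coef_deriv.
Qed.

Lemma inPi_shifted_monomial : (\sum_m n m < q)%N -> inPi (shifted_monomial q n z).
Proof.
move=> ltsumq a leqa; rewrite /shifted_monomial.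
have [/forallP lean | /forallPn[m]] := boolP [forall m, a m <= n m]%N.
  have : (mdeg a <= \sum_m n m)%N by apply: leq_sum => m _; exact: lean.
  by move: leqa ltsumq; lia.
by rewrite -ltnNge => /shift_coef_small lt_n_a; rewrite (bigD1 m) //= lt_n_a mul0r.
Qed.

Lemma Dop_shifted_monomial_high coef :
  (forall m, n m < q)%N -> (forall m, n m <= 4)%N -> (2 < \sum_m n m)%N ->
  Dop coef (shifted_monomial q n z) z = 0.
Proof.
move=> ltnq len4 gt2; rewrite /Dop; apply: big1 => b le2.
rewrite pderiv_shifted_monomial //.
have [/forallP eqnb | /forallPn[m /negbTE neqm]] := boolP [forall m, n m == b m].
  suff : (\sum_m n m <= 2)%N by rewrite leqNgt gt2.
  by rewrite (eq_bigr (fun m => nat_of_ord (b m))) // => m _; exact/eqP.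
by rewrite (bigD1 m) //= neqm mul0r mulr0.
Qed.

End ShiftedMonomials.

Definition axis_exp (d : nat) (i : 'I_d) (k : nat) : 'I_d -> nat :=
  fun m => if m == i then k else 0%N.

Lemma axis_exp_le d (i : 'I_d) k m : (axis_exp i k m <= k)%N.
Proof. by rewrite /axis_exp; case: ifP. Qed.

Lemma sum_axis_exp d (i : 'I_d) k : (\sum_m axis_exp i k m)%N = k.
Proof. by rewrite (bigD1 i) //= /axis_exp eqxx big1 ?addn0 // => m /negbTE ->. Qed.

Lemma prod_axis_exp (R : comPzSemiRingType) d (i : 'I_d) k (y : 'I_d -> R) :
  \prod_m y m ^+ axis_exp i k m = y i ^+ k.
Proof. by rewrite (bigD1 i) //= /axis_exp eqxx big1 ?mulr1 // => m /negbTE ->. Qed.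

Definition axis_index (d : nat) (i : 'I_d) : {ffun 'I_d -> 'I_3} :=
  [ffun m => inord (axis_exp i 2 m)].

Lemma axis_indexE d (i : 'I_d) m : axis_index i m = axis_exp i 2 m :> nat.
Proof. by rewrite ffunE inordK // ltnS axis_exp_le. Qed.

Lemma eq_axis_index d (i : 'I_d) (b : {ffun 'I_d -> 'I_3}) :
  (forall m, b m = axis_exp i 2 m :> nat) -> b = axis_index i.
Proof. by move=> bE; apply/ffunP => m; apply/val_inj; rewrite /= axis_indexE. Qed.

Lemma mdeg_axis_index d (i : 'I_d) : mdeg (axis_index i) = 2%N.
Proof. by rewrite /mdeg; under eq_bigr do rewrite axis_indexE; exact: sum_axis_exp. Qed.

Lemma Dop_shifted_axis_square (R : comPzRingType) d q (i : 'I_d) coef (z : 'rV[R]_d) :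
  (2 < q)%N -> Dop coef (shifted_monomial q (axis_exp i 2) z) z = coef (axis_index i) z * 2.
Proof.
move=> lt2q; have ltq m : (axis_exp i 2 m < q)%N by apply: leq_ltn_trans (axis_exp_le _ _ _) _.
have le4 m : (axis_exp i 2 m <= 4)%N by apply: leq_trans (axis_exp_le _ _ _) _.
rewrite /Dop (bigD1 (axis_index i)) ?mdeg_axis_index //= big1 ?addr0 => [|b /andP[_ neqb]].
  rewrite pderiv_shifted_monomial //; under eq_bigr do rewrite axis_indexE eqxx.
  by rewrite (bigD1 i) //= /axis_exp eqxx big1 ?mulr1 // => m /negbTE ->.
rewrite pderiv_shifted_monomial //.
have [/forallP eqb | /forallPn[m /negbTE neqm]] := boolP [forall m, axis_exp i 2 m == b m].
  by move/eqP: neqb; case; apply: eq_axis_index => m; rewrite (eqP (eqb m)).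
by rewrite (bigD1 m) //= neqm mul0r mulr0.
Qed.

Lemma mono_delta_mx_axis (R : comPzRingType) d k (i : 'I_d) (b : {ffun 'I_d -> 'I_k}) m :
  m != i -> b m != 0%N :> nat -> mono b (delta_mx ord0 i : 'rV[R]_d) = 0.
Proof.
move=> neqmi bm_neq0; rewrite /mono (bigD1 m) //= mxE (negbTE neqmi) andbF.
by rewrite expr0n (negbTE bm_neq0) mul0r.
Qed.

Lemma elliptic_axis_coef_gt0 (R : realFieldType) d coef (z : 'rV[R]_d) (i : 'I_d) :
  elliptic_at coef z -> 0 < coef (axis_index i) z.
Proof.
pose e : 'rV[R]_d := delta_mx ord0 i.
have e_neq0 : e != 0.
  by apply/eqP => /rowP/(_ i); rewrite !mxE !eqxx => /eqP; rewrite oner_eq0.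
move=> /(_ e e_neq0); rewrite (bigD1 (axis_index i)) ?mdeg_axis_index //= big1 ?addr0.
  rewrite /mono; under eq_bigr do rewrite axis_indexE.
  by rewrite (prod_axis_exp i 2 (fun m => e ord0 m)) /e mxE !eqxx expr1n mulr1.
move=> b /andP[/eqP deg2 neqb].
have [/forallP off_i | /forallPn[m]] := boolP [forall m, (m != i) ==> (b m == 0%N :> nat)].
  have off_i' m : m != i -> b m = 0%N :> nat by move=> neq; apply/eqP/(implyP (off_i m)).
  suff bE : b = axis_index i by rewrite bE eqxx in neqb.
  apply: eq_axis_index => m; rewrite /axis_exp; case: eqP => [->|/eqP/off_i'] //.
  by move: deg2; rewrite /mdeg (bigD1 i) //= big1 ?addn0 // => m' /off_i'.
by rewrite negb_imply => /andP[neqmi bm_neq0]; rewrite (mono_delta_mx_axis _ neqmi) ?mulr0.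
Qed.

Lemma exact_axis_power (R : realFieldType) d N coef (z : 'rV[R]_d)
    (x : 'I_N.+1 -> 'rV[R]_d) (w : 'I_N.+1 -> R) q (i : 'I_d) k :
  exact_of_order coef z x w q -> (k < q)%N ->
  Dop coef (shifted_monomial q (axis_exp i k) z) z =
  \sum_j w j * (x j ord0 i - z ord0 i) ^+ k.
Proof.
move=> exact ltkq; rewrite exact; last by apply: inPi_shifted_monomial; rewrite sum_axis_exp.
apply: eq_bigr => j _; rewrite peval_shifted_monomial ?prod_axis_exp // => m.
exact: leq_ltn_trans (axis_exp_le _ _ _) ltkq.
Qed.

Lemma pos_weighted_sum_eq0 (R : realFieldType) N (w f : 'I_N.+1 -> R) :
  (forall j, j != ord0 -> 0 < w j) -> f ord0 = 0 -> (forall j, 0 <= f j) ->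
  \sum_j w j * f j = 0 -> forall j, f j = 0.
Proof.
move=> w_gt0 f0 f_ge0 sum0 j; have [-> // | neqj] := eqVneq j ord0.
have terms_ge0 k : 0 <= w k * f k.
  have [->|/w_gt0/ltW wk_ge0] := eqVneq k ord0; first by rewrite f0 mulr0.
  exact: mulr_ge0.
have /eqP := psumr_eq0P (fun k _ => terms_ge0 k) sum0 (i := j) isT.
by rewrite mulf_eq0 gt_eqF ?w_gt0 //= => /eqP.
Qed.

Theorem mainTheorem13 (R : realFieldType) (d N : nat) (hd : (0 < d)%N)
    (coef : {ffun 'I_d -> 'I_3} -> 'rV[R]_d -> R) (z : 'rV[R]_d)
    (x : 'I_N.+1 -> 'rV[R]_d) (hinj : injective x) (hx0 : x ord0 = z)
    (hell : elliptic_at coef z) :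
  forall (w : 'I_N.+1 -> R) (q : nat), (5 <= q)%N ->
    ~ (positive_formula w /\ exact_of_order coef z x w q).
Proof.
move=> w q le5q [[_ w_gt0] exact].
pose i := Ordinal hd; pose y j := x j ord0 i - z ord0 i.
have y0 : y ord0 = 0 by rewrite /y hx0 subrr.
have quartic0 : \sum_j w j * y j ^+ 4 = 0.
  rewrite -(exact_axis_power i exact le5q).
  apply: Dop_shifted_monomial_high; rewrite ?sum_axis_exp // => m.
    exact: leq_ltn_trans (axis_exp_le _ _ _) le5q.
  exact: axis_exp_le.
have y4_eq0 : forall j, y j ^+ 4 = 0.
  apply: (pos_weighted_sum_eq0 w_gt0 _ _ quartic0); first by rewrite y0 expr0n.
  by move=> j; rewrite (exprM _ 2 2) sqr_ge0.
have y_eq0 j : y j = 0 by have /eqP := y4_eq0 j; rewrite expf_eq0 => /andP[_ /eqP].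
have lt2q : (2 < q)%N by apply: ltn_trans le5q.
have := elliptic_axis_coef_gt0 i hell.
rewrite -(pmulr_lgt0 _ (ltr0n R 2)) -(Dop_shifted_axis_square _ _ _ lt2q).
rewrite (exact_axis_power i exact lt2q) big1 ?ltxx // => j _.
by have := y_eq0 j; rewrite /y => ->; rewrite expr0n mulr0.
Qed.
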